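(* Consider Q-learning with on-policy learning policies as in the context with constant parameters $\alpha_k\equiv\alpha$, $\epsilon_k\equiv\epsilon$, $\tau_k\equiv\tau$, under the exploration assumption, with $\alpha<1/c_1$ where $c_1=\tfrac12\lambda^{r_b}\mu_{\pi_b,\min}\delta_b(1-\gamma)$ and $\lambda=\min_{0\le n\le k}\min_{s,a}\pi_n(a\mid s)$, $\epsilon\in(0,1]$ and $\tau\in(0,1/(1-\gamma)]$. Then for all $k\ge0$, \[ \mathbb E[\|Q^{\pi_k}-Q^*\|_\infty^2]\le\frac{12\gamma^2}{(1-\gamma)^2}\mathbb E[\|Q_k-Q^*\|_\infty^2]+\frac{12\epsilon^2}{(1-\gamma)^4}+\frac{3\tau^2\log^2(|\mathcal A|)}{(1-\gamma)^2}. \]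
   Context: MDP: finite state set $\mathcal S$, finite action set $\mathcal A$, transition kernel $p(s'\mid s,a)$, reward $\mathcal R$ with $|\mathcal R(s,a)|\le1$, discount $\gamma\in(0,1)$. For a policy $\pi$, $Q^\pi(s,a)=\mathbb E_\pi[\sum_{k\ge0}\gamma^k\mathcal R(S_k,A_k)\mid S_0=s,A_0=a]$ where $A_k\sim\pi(\cdot\mid S_k)$ for $k\ge1$. $Q^*$ is the optimal Q-function. $\|\cdot\|_\infty$ is the max norm. Algorithm: given $\alpha_k>0$, $\epsilon_k\in(0,1]$, $\tau_k>0$, initial $Q_0$ with $\|Q_0\|_\infty\le1/(1-\gamma)$ and state $S_0$, for $k=0,1,\dots$: $\pi_k(a\mid s)=\frac{\epsilon_k}{|\mathcal A|}+(1-\epsilon_k)\frac{\exp(Q_k(s,a)/\tau_k)}{\sum_{a'}\exp(Q_k(s,a')/\tau_k)}$; $A_k\sim\pi_k(\cdot\mid S_k)$, $S_{k+1}\sim p(\cdot\mid S_k,A_k)$; $Q_{k+1}(s,a)=Q_k(s,a)+\alpha_k\mathbb 1_{\{(S_k,A_k)=(s,a)\}}(\mathcal R(S_k,A_k)+\gamma\max_{a'}Q_k(S_{k+1},a')-Q_k(S_k,A_k))$. The policy $\pi_k$ is a (random) policy; $Q^{\pi_k}$ is its Q-function. Exploration assumption: there is a policy $\pi_b$ with $\pi_b(a\mid s)>0$ for all $(s,a)$ whose state chain $P_{\pi_b}(s,s')=\sum_a p(s'\mid s,a)\pi_b(a\mid s)$ is irreducible; $\mu_{\pi_b}$ its stationary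 distribution, $\mu_{\pi_b,\min}=\min_s\mu_{\pi_b}(s)$; $\mathcal P_{\pi_b}=(P_{\pi_b}+I)/2$; $r_b\in\mathbb Z_+$, $\delta_b>0$ satisfy $\min_{s,s'}\mathcal P_{\pi_b}^{r_b}(s,s')\ge\delta_b$. *)

From HB Require Import structures.
From mathcomp Require Import all_boot all_order all_algebra.
From mathcomp Require Import all_classical all_reals all_analysis.
Set Implicit Arguments. Unset Strict Implicit. Unset Printing Implicit Defensive.
Import Order.TTheory GRing.Theory Num.Theory.
Local Open Scope ring_scope.
Local Open Scope classical_set_scope.

Section QLearning.
Context {R : realType} {S A : finType}.

Definition is_kernel (p : S -> A -> S -> R) : Prop :=
  (forall s a s', 0 <= p s a s') /\ (forall s a, \sum_(s' : S) p s a s' = 1).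

Definition is_policy (pi : S -> A -> R) : Prop :=
  (forall s a, 0 <= pi s a) /\ (forall s, \sum_(a : A) pi s a = 1).

Definition sa_step (p : S -> A -> S -> R) (pi : S -> A -> R)
  (d : S * A -> R) : S * A -> R :=
  fun x => \sum_(y : S * A) d y * p y.1 y.2 x.1 * pi x.1 x.2.

(* law of (S_n, A_n) given S_0 = s, A_0 = a *)
Definition sa_dist (p : S -> A -> S -> R) (pi : S -> A -> R) (s : S) (a : A)
  (n : nat) : S * A -> R :=
  iter n (sa_step p pi) (fun x => if x == (s, a) then 1 else 0).

(* Q^pi(s,a) = E_pi[ sum_k gamma^k R(S_k,A_k) | S_0 = s, A_0 = a ]
   = sum_k gamma^k E_pi[R(S_k,A_k) | S_0=s, A_0=a] *)
Definition Qpi (p : S -> A -> S -> R) (rew : S -> A -> R) (gamma : R)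
  (pi : S -> A -> R) (s : S) (a : A) : R :=
  \big[+%R/0%R]_(0 <= n <oo)
     (gamma ^+ n * \sum_(x : S * A) sa_dist p pi s a n x * rew x.1 x.2).

Definition Qstar (p : S -> A -> S -> R) (rew : S -> A -> R) (gamma : R)
  (s : S) (a : A) : R :=
  sup [set Qpi p rew gamma pi s a | pi in [set pi | is_policy pi]].

Definition supnorm (Q : S -> A -> R) : R :=
  \big[Num.max/0]_(x : S * A) `|Q x.1 x.2|.

Definition Qsub (Q1 Q2 : S -> A -> R) : S -> A -> R := fun s a => Q1 s a - Q2 s a.

Definition softpol (eps tau : R) (Q : S -> A -> R) : S -> A -> R :=
  fun s a => eps / #|A|%:R
    + (1 - eps) * (expR (Q s a / tau) / \sum_(b : A) expR (Q s b / tau)).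

Definition qupdate (rew : S -> A -> R) (alpha gamma : R)
  (Q : S -> A -> R) (s : S) (a : A) (s' : S) : S -> A -> R :=
  fun x y => if (x == s) && (y == a) then
      Q x y + alpha * (rew s a + gamma * \big[Num.max/Q s' a]_(b : A) Q s' b - Q s a)
    else Q x y.

(* Running the algorithm along a history: from the current iterate Q and
   state s, the list h = [(A_j, S_{j+1}); ...] of the next actions and
   states. Returns the final iterate and the probability of the history. *)
Fixpoint run (p : S -> A -> S -> R) (rew : S -> A -> R) (alpha gamma eps tau : R)
  (Q : S -> A -> R) (s : S) (h : seq (A * S)) : (S -> A -> R) * R :=
  match h with
  | [::] => (Q, 1)
  | (a, s') :: h' =>
      let r := run p rew alpha gamma eps tau (qupdate rew alpha gamma Q s a s') s' h' in
      (r.1, softpol eps tau Q s a * p s a s' * r.2)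
  end.

(* E[ f(Q_k) ] : expectation over all histories
   (A_0,S_1,...,A_{k-1},S_k) starting from Q_0 and S_0 *)
Definition Eiter (p : S -> A -> S -> R) (rew : S -> A -> R) (alpha gamma eps tau : R)
  (Q0 : S -> A -> R) (s0 : S) (k : nat) (f : (S -> A -> R) -> R) : R :=
  \sum_(h : k.-tuple (A * S))
     (run p rew alpha gamma eps tau Q0 s0 h).2 * f (run p rew alpha gamma eps tau Q0 s0 h).1.

(* lambda = min_{0<=n<=k} min_{s,a} pi_n(a|s) along the history h
   (seed 1 is harmless since all pi_n(a|s) <= 1) *)
Definition lambda_hist (p : S -> A -> S -> R) (rew : S -> A -> R)
  (alpha gamma eps tau : R) (Q0 : S -> A -> R) (s0 : S) (k : nat)
  (h : k.-tuple (A * S)) : R :=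
  \big[Num.min/1]_(n < k.+1) \big[Num.min/1]_(x : S * A)
     softpol eps tau (run p rew alpha gamma eps tau Q0 s0 (take n h)).1 x.1 x.2.

Definition Ppi (p : S -> A -> S -> R) (pi : S -> A -> R) : S -> S -> R :=
  fun s s' => \sum_(a : A) p s a s' * pi s a.

Definition kmul (P Q : S -> S -> R) : S -> S -> R :=
  fun s s' => \sum_(u : S) P s u * Q u s'.

Definition kid : S -> S -> R := fun s s' => if s == s' then 1 else 0.

Definition kpow (P : S -> S -> R) (n : nat) : S -> S -> R := iter n (kmul P) kid.

Definition irreducible (P : S -> S -> R) : Prop :=
  forall s s', exists n, 0 < kpow P n s s'.

Definition stationary (P : S -> S -> R) (mu : S -> R) : Prop :=
  (forall s, 0 <= mu s) /\ \sum_(s : S) mu s = 1 /\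
  (forall s', \sum_(s : S) mu s * P s s' = mu s').

Definition lazyk (P : S -> S -> R) : S -> S -> R :=
  fun s s' => (P s s' + kid s s') / 2.

End QLearning.

(* Everything happens pointwise in the iterate Q = Q_k: averaging over the
   histories, whose weights sum to at most 1, preserves the bound.  Let pi be
   the eps-softmax policy of Q, d = ||Q - Q*|| and e = ||Q^pi - Q*||.  Against
   Q*, pi is c-greedy with c = 2 eps / (1 - gamma) + 2 d + tau ln |A|: the
   uniform part costs at most 2 eps / (1 - gamma), the softmax falls short of
   the maximum by at most tau ln |A| (Gibbs' inequality), and trading Q for Q*
   costs 2 d.  Comparing the Bellman equations of pi and of any other policy
   gives e <= gamma (c + e), i.e. e <= gamma c / (1 - gamma), and
   (x + y + z)^2 <= 3 (x^2 + y^2 + z^2) splits the square into the three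
   terms. *)

From HB Require Import structures.
From mathcomp Require Import all_boot all_order all_algebra.
From mathcomp Require Import all_classical all_reals all_analysis.
From mathcomp Require Import ring lra.
Set Implicit Arguments.
Unset Strict Implicit.
Unset Printing Implicit Defensive.
Import Order.TTheory GRing.Theory Num.Theory.
Import numFieldNormedType.Exports.
Local Open Scope ring_scope.

Section SupNorm.
Context {R : realType} {S A : finType}.

Lemma supnorm_ge0 (Q : S -> A -> R) : 0 <= supnorm Q.
Proof.
by apply: (big_ind (fun x => 0 <= x)) => // x y x0 y0; rewrite le_max x0.
Qed.

Lemma normr_le_supnorm (Q : S -> A -> R) s a : `|Q s a| <= supnorm Q.
Proof. exact: (le_bigmax _ (fun x : S * A => `|Q x.1 x.2|) (s, a)). Qed.

Lemma supnorm_le (Q : S -> A -> R) c :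
  0 <= c -> (forall s a, `|Q s a| <= c) -> supnorm Q <= c.
Proof. by move=> c0 Qc; apply: bigmax_le => // -[s a] _; apply: Qc. Qed.

Lemma supnorm_card0 (Q : S -> A -> R) : #|A| = 0%N -> supnorm Q = 0.
Proof.
move=> A0; apply/eqP; rewrite eq_le supnorm_ge0 andbT.
by apply: supnorm_le => // s a; move: (card0_eq A0 a); rewrite inE.
Qed.

End SupNorm.

Section StateActionChain.
Context {R : realType} {S A : finType}.
Variables (p : S -> A -> S -> R) (pi : S -> A -> R).

Definition sa_point (y : S * A) : S * A -> R := fun x => if x == y then 1 else 0.

Lemma sum_mul_sa_point (d : S * A -> R) x : \sum_y d y * sa_point y x = d x.
Proof.
rewrite (bigD1 x) //= /sa_point eqxx mulr1 big1 ?addr0 // => y /negbTE yx.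
by rewrite eq_sym yx mulr0.
Qed.

Lemma iter_sa_step_lin n (d : S * A -> R) x :
  iter n (sa_step p pi) d x = \sum_y d y * iter n (sa_step p pi) (sa_point y) x.
Proof.
elim: n x => [|n IH] x /=; first by rewrite sum_mul_sa_point.
set F := iter n (sa_step p pi).
transitivity (\sum_z F d z * p z.1 z.2 x.1 * pi x.1 x.2) => //.
rewrite (eq_bigr (fun z => \sum_y d y * F (sa_point y) z * p z.1 z.2 x.1 * pi x.1 x.2)).
  rewrite exchange_big /=; apply: eq_bigr => y _.
  by rewrite mulr_sumr; apply: eq_bigr => z _; rewrite !mulrA.
by move=> z _; rewrite /F IH !mulr_suml.
Qed.

Lemma sa_distS s a n x :
  sa_dist p pi s a n.+1 x =
  \sum_y p s a y.1 * pi y.1 y.2 * sa_dist p pi y.1 y.2 n x.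
Proof.
rewrite /sa_dist iterSr iter_sa_step_lin; apply: eq_bigr => y _; congr (_ * _).
rewrite /sa_step (bigD1 (s, a)) //= eqxx mul1r big1 ?addr0 // => z /negbTE ->.
by rewrite !mul0r.
Qed.

Lemma sum_sa_transition s a (f : S -> A -> R) :
  \sum_y p s a y.1 * pi y.1 y.2 * f y.1 y.2 =
  \sum_s' p s a s' * \sum_a' pi s' a' * f s' a'.
Proof.
rewrite -(pair_bigA _ (fun s' a' => p s a s' * pi s' a' * f s' a')) /=.
by apply: eq_bigr => s' _; rewrite mulr_sumr; apply: eq_bigr => a' _; rewrite mulrA.
Qed.

Hypothesis p_kernel : is_kernel p.
Hypothesis pi_policy : is_policy pi.

Lemma sa_transition_ge0 s a y : 0 <= p s a y.1 * pi y.1 y.2.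
Proof. by rewrite mulr_ge0 //; [apply: p_kernel.1 | apply: pi_policy.1]. Qed.

Lemma sum_sa_transition1 s a : \sum_y p s a y.1 * pi y.1 y.2 = 1.
Proof.
under eq_bigr do rewrite -[_ * _]mulr1.
rewrite (sum_sa_transition s a (fun _ _ => 1)) -[RHS](p_kernel.2 s a).
by apply: eq_bigr => s' _; under eq_bigr do rewrite mulr1; rewrite pi_policy.2 mulr1.
Qed.

Lemma sa_dist_ge0 s a n x : 0 <= sa_dist p pi s a n x.
Proof.
elim: n s a => [|n IH] s a; first by rewrite /sa_dist /=; case: ifP.
by rewrite sa_distS; apply: sumr_ge0 => y _; rewrite mulr_ge0 ?sa_transition_ge0.
Qed.

Lemma sum_sa_dist s a n : \sum_x sa_dist p pi s a n x = 1.
Proof.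
elim: n s a => [|n IH] s a.
  by rewrite /sa_dist /= (bigD1 (s, a)) //= eqxx big1 ?addr0 // => y /negbTE ->.
under eq_bigr do rewrite sa_distS.
rewrite exchange_big /= -[RHS](sum_sa_transition1 s a).
by apply: eq_bigr => y _; rewrite -mulr_sumr IH mulr1.
Qed.

End StateActionChain.

Section PolicyEvaluation.
Context {R : realType} {S A : finType}.
Variables (p : S -> A -> S -> R) (rew : S -> A -> R) (gamma : R).
Variable pi : S -> A -> R.
Hypothesis p_kernel : is_kernel p.
Hypothesis pi_policy : is_policy pi.
Hypothesis rew_le1 : forall s a, `|rew s a| <= 1.
Hypothesis gamma01 : 0 < gamma < 1.

Let gamma_ge0 : 0 <= gamma.
Proof. by case/andP: gamma01 => /ltW. Qed.

(* [Qpi p rew gamma pi s a] unfolds to the limit of [series (Qpi_term s a)]. *)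
Definition Qpi_term s a n :=
  gamma ^+ n * \sum_x sa_dist p pi s a n x * rew x.1 x.2.

Lemma Qpi_term0 s a : Qpi_term s a 0 = rew s a.
Proof.
rewrite /Qpi_term expr0 mul1r (bigD1 (s, a)) //= /sa_dist /= eqxx mul1r.
by rewrite big1 ?addr0 // => y /negbTE ->; rewrite mul0r.
Qed.

Lemma Qpi_termS s a n :
  Qpi_term s a n.+1 = gamma * \sum_y p s a y.1 * pi y.1 y.2 * Qpi_term y.1 y.2 n.
Proof.
rewrite /Qpi_term exprS -mulrA; congr (_ * _).
under eq_bigr do rewrite sa_distS mulr_suml.
rewrite exchange_big mulr_sumr /=; apply: eq_bigr => y _.
rewrite mulrCA; congr (_ * _); rewrite mulr_sumr.
by apply: eq_bigr => x _; rewrite !mulrA.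
Qed.

Lemma norm_Qpi_term_le s a n : `|Qpi_term s a n| <= gamma ^+ n.
Proof.
rewrite /Qpi_term normrM ger0_norm ?exprn_ge0 // -[leRHS]mulr1.
rewrite ler_wpM2l ?exprn_ge0 // -(sum_sa_dist p_kernel pi_policy s a n).
apply: le_trans (ler_norm_sum _ _ _) _; apply: ler_sum => x _.
by rewrite normrM ger0_norm ?sa_dist_ge0 // ler_piMr ?sa_dist_ge0.
Qed.

Lemma is_cvg_Qpi_series s a : cvgn (series (Qpi_term s a)).
Proof.
apply: normed_cvg; apply: (@series_le_cvg _ _ (geometric 1 gamma)) => n.
- exact: normr_ge0.
- by rewrite /geometric /= mul1r exprn_ge0.
- by rewrite /geometric /= mul1r norm_Qpi_term_le.
- by apply: is_cvg_geometric_series; rewrite ger0_norm //; case/andP: gamma01.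
Qed.

Lemma Qpi_seriesS s a N :
  series (Qpi_term s a) N.+1 =
  rew s a + gamma * \sum_y p s a y.1 * pi y.1 y.2 * series (Qpi_term y.1 y.2) N.
Proof.
rewrite /series /= big_nat_recl // Qpi_term0; congr (_ + _).
under eq_bigr do rewrite Qpi_termS.
rewrite -mulr_sumr exchange_big /=; congr (_ * _).
by apply: eq_bigr => y _; rewrite mulr_sumr.
Qed.

Lemma Qpi_bellman s a :
  Qpi p rew gamma pi s a =
  rew s a + gamma * \sum_y p s a y.1 * pi y.1 y.2 * Qpi p rew gamma pi y.1 y.2.
Proof.
set T := fun y : S * A => p s a y.1 * pi y.1 y.2.
have lim1 : (series (Qpi_term s a) N.+1 @[N --> \oo] --> Qpi p rew gamma pi s a)%classic.
  by rewrite (cvg_shiftS (series (Qpi_term s a))); exact: is_cvg_Qpi_series.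
have lim2 : (series (Qpi_term s a) N.+1 @[N --> \oo] -->
    rew s a + gamma * \sum_y T y * Qpi p rew gamma pi y.1 y.2)%classic.
  under eq_fun do rewrite Qpi_seriesS.
  apply: cvgD; first exact: cvg_cst.
  apply: cvgMl_tmp; apply: cvg_big => //; first exact: add_continuous.
  by move=> y _; apply: cvgMl_tmp; exact: is_cvg_Qpi_series.
exact: cvg_unique lim1 lim2.
Qed.

Lemma norm_Qpi_le s a : `|Qpi p rew gamma pi s a| <= 1 / (1 - gamma).
Proof.
set m := supnorm (Qpi p rew gamma pi).
suff : m <= 1 + gamma * m.
  move=> le_m; apply: le_trans (normr_le_supnorm _ s a) _.
  have [_ gamma_lt1] := andP gamma01.
  by rewrite -/m ler_pdivlMr ?subr_gt0 //; lra.
apply: supnorm_le => [|s' a']; first by rewrite addr_ge0 ?mulr_ge0 ?supnorm_ge0.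
rewrite Qpi_bellman; apply: le_trans (ler_normD _ _) _; apply: lerD => //.
rewrite normrM ger0_norm // ler_wpM2l //.
apply: le_trans (ler_norm_sum _ _ _) _.
rewrite -[leRHS]mul1r -(sum_sa_transition1 p_kernel pi_policy s' a') mulr_suml.
apply: ler_sum => y _; rewrite normrM ger0_norm ?sa_transition_ge0 //.
by rewrite ler_wpM2l ?sa_transition_ge0 ?normr_le_supnorm.
Qed.

End PolicyEvaluation.

Section OptimalQ.
Context {R : realType} {S A : finType}.
Variables (p : S -> A -> S -> R) (rew : S -> A -> R) (gamma : R).
Hypothesis p_kernel : is_kernel p.
Hypothesis rew_le1 : forall s a, `|rew s a| <= 1.
Hypothesis gamma01 : 0 < gamma < 1.
Hypothesis policy_exists : exists pi : S -> A -> R, is_policy pi.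

Let Qpi_values s a :=
  [set Qpi p rew gamma pi s a | pi in [set pi | is_policy pi]]%classic.

Let has_ubound_Qpi_values s a : has_ubound (Qpi_values s a).
Proof.
exists (1 / (1 - gamma)) => _ [pi pi_policy <-].
exact: le_trans (ler_norm _) (norm_Qpi_le p_kernel pi_policy rew_le1 gamma01 s a).
Qed.

Lemma Qpi_le_Qstar pi s a :
  is_policy pi -> Qpi p rew gamma pi s a <= Qstar p rew gamma s a.
Proof.
by move=> pi_policy; apply: (ub_le_sup (has_ubound_Qpi_values s a)); exists pi.
Qed.

Lemma Qstar_le s a c :
  (forall pi, is_policy pi -> Qpi p rew gamma pi s a <= c) ->
  Qstar p rew gamma s a <= c.
Proof.
move=> Qpi_le_c; apply: ge_sup => [|_ [pi pi_policy <-]]; last exact: Qpi_le_c.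
by case: policy_exists => pi pi_policy; exists (Qpi p rew gamma pi s a), pi.
Qed.

Lemma norm_Qstar_le s a : `|Qstar p rew gamma s a| <= 1 / (1 - gamma).
Proof.
have Qpi_bounds pi : is_policy pi ->
    - (1 / (1 - gamma)) <= Qpi p rew gamma pi s a <= 1 / (1 - gamma).
  by move=> pi_policy; rewrite -ler_norml norm_Qpi_le.
rewrite ler_norml; apply/andP; split.
  case: policy_exists => pi pi_policy; apply: le_trans (Qpi_le_Qstar s a pi_policy).
  by case/andP: (Qpi_bounds _ pi_policy).
by apply: Qstar_le => pi /Qpi_bounds /andP[].
Qed.

End OptimalQ.

Section NearGreedyPolicy.
Context {R : realType} {S A : finType}.
Variables (p : S -> A -> S -> R) (rew : S -> A -> R) (gamma : R).
Hypothesis p_kernel : is_kernel p.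
Hypothesis rew_le1 : forall s a, `|rew s a| <= 1.
Hypothesis gamma01 : 0 < gamma < 1.
Variables (pi : S -> A -> R) (c : R).
Hypothesis pi_policy : is_policy pi.
Hypothesis c_ge0 : 0 <= c.
Hypothesis pi_near_greedy :
  forall s a', Qstar p rew gamma s a' - \sum_a pi s a * Qstar p rew gamma s a <= c.

Let gamma_ge0 : 0 <= gamma.
Proof. by case/andP: gamma01 => /ltW. Qed.

Let Qpi_le_opt := Qpi_le_Qstar p_kernel rew_le1 gamma01.
Let e := supnorm (Qsub (Qpi p rew gamma pi) (Qstar p rew gamma)).

Lemma Qpi_sub_near_greedy_le pi' s a : is_policy pi' ->
  Qpi p rew gamma pi' s a - Qpi p rew gamma pi s a <= gamma * (c + e).
Proof.
move=> pi'_policy.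
rewrite (Qpi_bellman p_kernel pi'_policy rew_le1 gamma01).
rewrite (Qpi_bellman p_kernel pi_policy rew_le1 gamma01).
rewrite !sum_sa_transition opprD addrACA subrr add0r -mulrBr ler_wpM2l // -sumrB.
rewrite -[leRHS]mul1r -(p_kernel.2 s a) mulr_suml; apply: ler_sum => s' _.
rewrite -mulrBr; apply: ler_wpM2l; first exact: p_kernel.1.
set V := \sum_a0 pi s' a0 * Qstar p rew gamma s' a0.
have pi'_le : \sum_a' pi' s' a' * Qpi p rew gamma pi' s' a' <= V + c.
  rewrite -[V + c]mul1r -(pi'_policy.2 s') mulr_suml; apply: ler_sum => a' _.
  apply: ler_wpM2l; first exact: pi'_policy.1.
  apply: le_trans (Qpi_le_opt s' a' pi'_policy) _.
  by move: (pi_near_greedy s' a'); rewrite -/V; lra.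
have pi_ge : V - e <= \sum_a pi s' a * Qpi p rew gamma pi s' a.
  rewrite /V -[e]mul1r -(pi_policy.2 s') mulr_suml -sumrB; apply: ler_sum => b _.
  rewrite -mulrBr; apply: ler_wpM2l; first exact: pi_policy.1.
  move: (normr_le_supnorm (Qsub (Qpi p rew gamma pi) (Qstar p rew gamma)) s' b).
  by rewrite -/e ler_norml /Qsub => /andP[]; lra.
lra.
Qed.

Lemma near_greedy_suboptimality_le : e <= gamma * c / (1 - gamma).
Proof.
have [_ gamma_lt1] := andP gamma01.
have e_le : e <= gamma * (c + e).
  apply: supnorm_le => [|s a]; first by rewrite mulr_ge0 ?addr_ge0 ?supnorm_ge0.
  rewrite /Qsub ler0_norm ?subr_le0 ?(Qpi_le_opt _ _ pi_policy) //.
  have : Qstar p rew gamma s a <= Qpi p rew gamma pi s a + gamma * (c + e).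
    apply: (Qstar_le (ex_intro is_policy pi pi_policy)) => pi' pi'_policy.
    by have := Qpi_sub_near_greedy_le s a pi'_policy; lra.
  lra.
by rewrite ler_pdivlMr ?subr_gt0 //; nra.
Qed.

End NearGreedyPolicy.

Section Softmax.
Context {R : realType} {A : finType}.

Lemma ln_le_subr1 (y : R) : 0 < y -> ln y <= y - 1.
Proof.
by move=> y_gt0; have := @le_ln1Dx R (y - 1); rewrite [1 + _]addrC subrK; apply; lra.
Qed.

Lemma entropy_le_ln_card (q : A -> R) :
  (forall a, 0 < q a) -> \sum_a q a = 1 ->
  - \sum_a q a * ln (q a) <= ln (#|A|%:R : R).
Proof.
move=> q_gt0 q_sum1; set n : R := #|A|%:R.
have n_gt0 : 0 < n.
  rewrite ltr0n lt0n; apply/eqP => /card0_eq A0.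
  by move: q_sum1; rewrite big_pred0 // => /esym/eqP; rewrite oner_eq0.
suff : \sum_a q a * ln (n^-1 / q a) <= 0.
  have ln_ratio a : ln (n^-1 / q a) = - ln n - ln (q a).
    by rewrite lnM ?posrE ?invr_gt0 ?q_gt0 // !lnV ?posrE ?q_gt0.
  under eq_bigr do rewrite ln_ratio mulrBr mulrN.
  by rewrite sumrB sumrN -mulr_suml q_sum1 mul1r; lra.
apply: le_trans (_ : \sum_a (n^-1 - q a) <= 0).
  apply: ler_sum => a _; have qa_gt0 := q_gt0 a.
  have ratio_gt0 : 0 < n^-1 / q a by rewrite divr_gt0 ?invr_gt0.
  apply: le_trans (ler_wpM2l (ltW qa_gt0) (ln_le_subr1 ratio_gt0)) _.
  by rewrite mulrBr mulr1 mulrCA mulfV ?mulr1 ?gt_eqF.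
by rewrite sumrB q_sum1 sumr_const -mulr_natr mulVf ?gt_eqF ?subrr.
Qed.

Definition softmax (tau : R) (x : A -> R) (a : A) : R :=
  expR (x a / tau) / \sum_b expR (x b / tau).

Lemma softmax_gt0 tau x a : 0 < softmax tau x a.
Proof. by rewrite divr_gt0 ?expR_gt0 // (bigD1 a) //= ltr_pwDl ?expR_gt0 ?sumr_ge0. Qed.

Lemma sum_softmax tau x : (0 < #|A|)%N -> \sum_a softmax tau x a = 1.
Proof.
case/card_gt0P=> b _; rewrite -mulr_suml mulfV // lt0r_neq0 //.
by rewrite (bigD1 b) //= ltr_pwDl ?expR_gt0 ?sumr_ge0.
Qed.

(* Gibbs: with q the softmax weights, x / tau = ln q + ln Z, so the mean of x
   is tau (ln Z - entropy) >= tau (ln Z - ln |A|), while x a' <= tau ln Z. *)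
Lemma softmax_gap (tau : R) (x : A -> R) a' : 0 < tau ->
  x a' - \sum_a softmax tau x a * x a <= tau * ln (#|A|%:R : R).
Proof.
move=> tau_gt0; set q := softmax tau x; set Z := \sum_b expR (x b / tau).
have A_gt0 : (0 < #|A|)%N by apply/card_gt0P; exists a'.
have Z_gt0 : 0 < Z by rewrite /Z (bigD1 a') //= ltr_pwDl ?expR_gt0 ?sumr_ge0.
have x_ln a : x a = tau * (ln (q a) + ln Z).
  rewrite /q /softmax -/Z lnM ?posrE ?invr_gt0 ?expR_gt0 // lnV ?posrE // expRK.
  by rewrite subrK mulrCA divff ?gt_eqF // mulr1.
have mean_x : \sum_a q a * x a = tau * (\sum_a q a * ln (q a) + ln Z).
  rewrite -[ln Z]mul1r -(sum_softmax tau x A_gt0) -/q mulr_suml -big_split /= mulr_sumr.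
  by apply: eq_bigr => a _; rewrite x_ln mulrCA mulrDr.
have x_le : x a' <= tau * ln Z.
  rewrite -ler_pdivrMl // -ler_expR lnK ?posrE // /Z (bigD1 a') //= mulrC lerDl.
  by rewrite sumr_ge0 // => *; rewrite ltW ?expR_gt0.
have := entropy_le_ln_card (softmax_gt0 tau x) (sum_softmax tau x A_gt0).
rewrite -/q mean_x -(ler_pM2l tau_gt0); nra.
Qed.

End Softmax.

Section SoftPolicy.
Context {R : realType} {S A : finType}.
Variables (eps tau : R) (Q : S -> A -> R).
Hypothesis eps01 : 0 < eps <= 1.

Lemma softpolE s a :
  softpol eps tau Q s a = eps / #|A|%:R + (1 - eps) * softmax tau (Q s) a.
Proof. by []. Qed.

Lemma softpol_ge0 s a : 0 <= softpol eps tau Q s a.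
Proof.
have [eps_gt0 eps_le1] := andP eps01.
rewrite softpolE; apply: addr_ge0; first by rewrite divr_ge0 // ltW.
by rewrite mulr_ge0 ?subr_ge0 // ltW ?softmax_gt0.
Qed.

Lemma softpol_policy : (0 < #|A|)%N -> is_policy (softpol eps tau Q).
Proof.
move=> A_gt0; split=> [|s]; first exact: softpol_ge0.
under eq_bigr do rewrite softpolE.
rewrite big_split /= -[\sum_i (1 - eps) * _]mulr_sumr sum_softmax // mulr1 sumr_const.
by rewrite (_ : #|_| = #|A|) // -[_ *+ _]mulr_natr mulfVK ?gt_eqF ?ltr0n // addrC subrK.
Qed.

Lemma sum_softpol_le1 s : \sum_a softpol eps tau Q s a <= 1.
Proof.
have [A0|A_gt0] := posnP #|A|; last by rewrite (softpol_policy A_gt0).2.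
by rewrite big1 // => a; move: (card0_eq A0 a); rewrite inE.
Qed.

Hypothesis tau_gt0 : 0 < tau.

Lemma softpol_gap (V : S -> A -> R) (K d : R) s a' :
  (forall a, `|V s a| <= K) -> (forall a, `|Q s a - V s a| <= d) ->
  V s a' - \sum_a softpol eps tau Q s a * V s a
  <= 2 * eps * K + 2 * d + tau * ln (#|A|%:R : R).
Proof.
move=> V_le QV_le; have [eps_gt0 eps_le1] := andP eps01.
set n : R := #|A|%:R; set L := ln n; set w := softmax tau (Q s).
have A_gt0 : (0 < #|A|)%N by apply/card_gt0P; exists a'.
have n_gt0 : 0 < n by rewrite ltr0n.
have [d_ge0 K_ge0] : 0 <= d /\ 0 <= K.
  by split; [apply: le_trans (QV_le a') | apply: le_trans (V_le a')].
have L_ge0 : 0 <= L by rewrite ln_ge0 // ler1n.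
have mix : \sum_a softpol eps tau Q s a * V s a =
    eps * ((\sum_a V s a) / n) + (1 - eps) * \sum_a w a * V s a.
  rewrite [in RHS]mulrCA mulr_suml mulr_sumr -big_split /=.
  by apply: eq_bigr => a _; rewrite softpolE -/n -/w; ring.
have uniform_gap : V s a' - (\sum_a V s a) / n <= 2 * K.
  have avg_ge : - K <= (\sum_a V s a) / n.
    rewrite ler_pdivlMr //; apply: le_trans (_ : \sum_(a : A) - K <= _).
      by rewrite sumr_const -mulr_natr; exact: lexx.
    by apply: ler_sum => a _; have := V_le a; rewrite ler_norml => /andP[].
  by have := V_le a'; rewrite ler_norml => /andP[_]; lra.
have softmax_part : V s a' - \sum_a w a * V s a <= tau * L + 2 * d.
  have := softmax_gap (Q s) a' tau_gt0; rewrite -/L -/w.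
  have mean_ge : \sum_a w a * Q s a - d <= \sum_a w a * V s a.
    rewrite -[d]mul1r -(sum_softmax tau (Q s) A_gt0) -/w mulr_suml -sumrB.
    apply: ler_sum => a _; rewrite -mulrBr; apply: ler_wpM2l; first exact/ltW/softmax_gt0.
    by have := QV_le a; rewrite ler_norml => /andP[]; lra.
  by have := QV_le a'; rewrite ler_norml => /andP[]; lra.
rewrite mix.
have : (1 - eps) * (V s a' - \sum_a w a * V s a) <= tau * L + 2 * d.
  apply: le_trans (ler_wpM2l _ softmax_part) _; first by rewrite subr_ge0.
  by apply: ler_piMl; [rewrite addr_ge0 ?mulr_ge0 // ltW | lra].
by nra.
Qed.

End SoftPolicy.

Section Arithmetic.
Context {R : realFieldType}.

Lemma sqr_add3_le (x y z : R) : (x + y + z) ^+ 2 <= 3 * (x ^+ 2 + y ^+ 2 + z ^+ 2).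
Proof.
have -> : 3 * (x ^+ 2 + y ^+ 2 + z ^+ 2) =
    (x + y + z) ^+ 2 + ((x - y) ^+ 2 + (y - z) ^+ 2 + (x - z) ^+ 2) by ring.
by rewrite lerDl !addr_ge0 ?sqr_ge0.
Qed.

Lemma discounted_bias_ge0 (gamma eps tau L : R) : gamma < 1 ->
  0 <= 12 * eps ^+ 2 / (1 - gamma) ^+ 4 + 3 * tau ^+ 2 * L ^+ 2 / (1 - gamma) ^+ 2.
Proof.
move=> gamma_lt1; have omg_ge0 : 0 <= 1 - gamma by rewrite subr_ge0 ltW.
apply: addr_ge0; apply: divr_ge0; rewrite ?exprn_ge0 //.
  by rewrite mulr_ge0 // sqr_ge0.
by rewrite mulr_ge0 ?sqr_ge0 // mulr_ge0 // sqr_ge0.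
Qed.

Lemma discounted_gap_sqr_le (gamma eps tau L d e : R) :
  0 <= gamma < 1 -> 0 <= e ->
  e <= gamma * (2 * eps * (1 / (1 - gamma)) + 2 * d + tau * L) / (1 - gamma) ->
  e ^+ 2 <= 12 * gamma ^+ 2 / (1 - gamma) ^+ 2 * d ^+ 2
            + 12 * eps ^+ 2 / (1 - gamma) ^+ 4
            + 3 * tau ^+ 2 * L ^+ 2 / (1 - gamma) ^+ 2.
Proof.
move=> /andP[gamma_ge0 gamma_lt1] e_ge0; set K := 1 / (1 - gamma).
have K_ge0 : 0 <= K by rewrite divr_ge0 // subr_ge0 ltW.
have K2 : ((1 - gamma) ^+ 2)^-1 = K ^+ 2 by rewrite /K mul1r exprVn.
have K4 : ((1 - gamma) ^+ 4)^-1 = K ^+ 4 by rewrite /K mul1r exprVn.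
rewrite K2 K4.
set a1 := gamma * K * (2 * d); set b1 := gamma * K * (2 * eps * K).
set c1 := gamma * K * (tau * L).
have -> : gamma * (2 * eps * K + 2 * d + tau * L) / (1 - gamma) = a1 + b1 + c1.
  by rewrite /a1 /b1 /c1 /K; ring.
move=> e_le; have e_sqr : e ^+ 2 <= (a1 + b1 + c1) ^+ 2.
  by rewrite ler_pXn2r ?nnegrE // (le_trans e_ge0 e_le).
have := le_trans e_sqr (sqr_add3_le a1 b1 c1).
have gamma2_le1 : gamma ^+ 2 <= 1 by rewrite expr_le1 // ltW.
have b_le : 3 * b1 ^+ 2 <= 12 * (eps * K ^+ 2) ^+ 2.
  rewrite (_ : 3 * b1 ^+ 2 = gamma ^+ 2 * (12 * (eps * K ^+ 2) ^+ 2)); last first.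
    by rewrite /b1; ring.
  by apply: ler_piMl => //; rewrite mulr_ge0 // sqr_ge0.
have c_le : 3 * c1 ^+ 2 <= 3 * (tau * L * K) ^+ 2.
  rewrite (_ : 3 * c1 ^+ 2 = gamma ^+ 2 * (3 * (tau * L * K) ^+ 2)); last first.
    by rewrite /c1; ring.
  by apply: ler_piMl => //; rewrite mulr_ge0 // sqr_ge0.
have a_eq : 3 * a1 ^+ 2 = 12 * gamma ^+ 2 * K ^+ 2 * d ^+ 2 by rewrite /a1; ring.
lra.
Qed.

End Arithmetic.

Section SoftPolicySuboptimality.
Context {R : realType} {S A : finType}.
Variables (p : S -> A -> S -> R) (rew : S -> A -> R) (gamma eps tau : R).
Hypothesis p_kernel : is_kernel p.
Hypothesis rew_le1 : forall s a, `|rew s a| <= 1.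
Hypothesis gamma01 : 0 < gamma < 1.
Hypothesis eps01 : 0 < eps <= 1.
Hypothesis tau_gt0 : 0 < tau.

Lemma supnorm_Qpi_softpol_sub_Qstar_sqr_le (Q : S -> A -> R) :
  supnorm (Qsub (Qpi p rew gamma (softpol eps tau Q)) (Qstar p rew gamma)) ^+ 2
  <= 12 * gamma ^+ 2 / (1 - gamma) ^+ 2 * supnorm (Qsub Q (Qstar p rew gamma)) ^+ 2
     + 12 * eps ^+ 2 / (1 - gamma) ^+ 4
     + 3 * tau ^+ 2 * ln (#|A|%:R : R) ^+ 2 / (1 - gamma) ^+ 2.
Proof.
have [gamma_gt0 gamma_lt1] := andP gamma01.
have [A0|A_gt0] := posnP #|A|.
  rewrite !supnorm_card0 // expr0n /= mulr0 add0r.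
  exact: discounted_bias_ge0.
set QS := Qstar p rew gamma; set d := supnorm (Qsub Q QS).
have pi_policy := softpol_policy tau Q eps01 A_gt0.
have QS_le := norm_Qstar_le p_kernel rew_le1 gamma01 (ex_intro is_policy _ pi_policy).
have near_greedy s a' :
    QS s a' - \sum_a softpol eps tau Q s a * QS s a
    <= 2 * eps * (1 / (1 - gamma)) + 2 * d + tau * ln (#|A|%:R : R).
  exact: softpol_gap eps01 tau_gt0 _ _ _ _ _ (QS_le s) (normr_le_supnorm (Qsub Q QS) s).
apply: discounted_gap_sqr_le; first by rewrite ltW.
  exact: supnorm_ge0.
apply: near_greedy_suboptimality_le near_greedy => //.
have L_ge0 : 0 <= ln (#|A|%:R : R) by rewrite ln_ge0 // ler1n.
have [eps_gt0 _] := andP eps01.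
by rewrite !addr_ge0 ?mulr_ge0 ?supnorm_ge0 // ?invr_ge0 ?subr_ge0 ltW.
Qed.

End SoftPolicySuboptimality.

Lemma big_tuple_cons (V : nmodType) (T : finType) k (F : k.+1.-tuple T -> V) :
  \sum_(h : k.+1.-tuple T) F h = \sum_(x : T) \sum_(t : k.-tuple T) F (cons_tuple x t).
Proof.
rewrite pair_big /= (reindex (fun xt : T * k.-tuple T => cons_tuple xt.1 xt.2)) //=.
exists (fun h => (thead h, behead_tuple h)) => [[x t] _ | h _] /=.
  by congr (_, _); apply: val_inj.
by rewrite [RHS]tuple_eta; apply: val_inj.
Qed.

Section HistoryExpectation.
Context {R : realType} {S A : finType}.
Variables (p : S -> A -> S -> R) (rew : S -> A -> R) (alpha gamma eps tau : R).
Hypothesis p_kernel : is_kernel p.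
Hypothesis eps01 : 0 < eps <= 1.

Let run_hist := run p rew alpha gamma eps tau.

Lemma run_prob_ge0 Q s (h : seq (A * S)) : 0 <= (run_hist Q s h).2.
Proof.
elim: h Q s => [|[a s'] h IH] Q s //=.
by rewrite !mulr_ge0 ?softpol_ge0 ?IH //; apply: p_kernel.1.
Qed.

Lemma sum_run_prob_le1 k Q s : \sum_(h : k.-tuple (A * S)) (run_hist Q s h).2 <= 1.
Proof.
elim: k Q s => [|k IH] Q s.
  by rewrite (big_pred1 [tuple]) // => t; apply/esym/eqP; exact: tuple0.
pose F a s' := \sum_(t : k.-tuple (A * S)) (run_hist Q s (cons_tuple (a, s') t)).2.
rewrite big_tuple_cons (eq_bigr (fun x => F x.1 x.2)) => [|[] //].
rewrite -(pair_bigA _ F) /=.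
apply: le_trans (sum_softpol_le1 tau Q eps01 s); apply: ler_sum => a _.
rewrite -[leRHS]mulr1 -(p_kernel.2 s a) mulr_sumr; apply: ler_sum => s' _.
rewrite /F /= -mulr_sumr -[leRHS]mulr1 ler_wpM2l ?IH //.
by rewrite mulr_ge0 ?softpol_ge0 //; apply: p_kernel.1.
Qed.

(* The history weights sum to at most 1 (to 0 when A is empty), hence the
   sign condition on C. *)
Lemma Eiter_le_affine k Q0 s0 (f g : (S -> A -> R) -> R) (c C : R) :
  0 <= C -> (forall Q, f Q <= c * g Q + C) ->
  Eiter p rew alpha gamma eps tau Q0 s0 k f
  <= c * Eiter p rew alpha gamma eps tau Q0 s0 k g + C.
Proof.
move=> C_ge0 fg; rewrite /Eiter.
pose w h := (run_hist Q0 s0 h).2; pose Qh h := (run_hist Q0 s0 h).1.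
apply: (@le_trans _ _ (\sum_(h : k.-tuple (A * S)) w h * (c * g (Qh h) + C))).
  by apply: ler_sum => h _; rewrite ler_wpM2l ?run_prob_ge0.
under eq_bigr do rewrite mulrDr mulrCA.
by rewrite big_split /= -mulr_sumr -mulr_suml lerD2l ler_piMl ?sum_run_prob_le1.
Qed.

End HistoryExpectation.

Theorem theorem2 (R : realType) (S A : finType)
  (p : S -> A -> S -> R) (rew : S -> A -> R) (gamma : R)
  (alpha eps tau : R) (Q0 : S -> A -> R) (s0 : S)
  (pib : S -> A -> R) (mu : S -> R) (rb : nat) (deltab : R) :
  is_kernel p ->
  (forall s a, `|rew s a| <= 1) ->
  0 < gamma < 1 ->
  supnorm Q0 <= 1 / (1 - gamma) ->
  (* exploration assumption *)
  is_policy pib -> (forall s a, 0 < pib s a) ->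
  irreducible (Ppi p pib) ->
  stationary (Ppi p pib) mu ->
  0 < deltab ->
  (forall s s', deltab <= kpow (lazyk (Ppi p pib)) rb s s') ->
  (* step sizes / parameters *)
  0 < alpha -> 0 < eps <= 1 -> 0 < tau <= 1 / (1 - gamma) ->
  forall k : nat,
  (forall h : k.-tuple (A * S),
     0 < (run p rew alpha gamma eps tau Q0 s0 h).2 ->
     alpha < 1 / (1 / 2 * lambda_hist p rew alpha gamma eps tau Q0 s0 h ^+ rb
                  * (\big[Num.min/mu s0]_(s : S) mu s) * deltab * (1 - gamma))) ->
  Eiter p rew alpha gamma eps tau Q0 s0 k
    (fun Q => supnorm (Qsub (Qpi p rew gamma (softpol eps tau Q)) (Qstar p rew gamma)) ^+ 2)
  <= 12 * gamma ^+ 2 / (1 - gamma) ^+ 2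
       * Eiter p rew alpha gamma eps tau Q0 s0 k
           (fun Q => supnorm (Qsub Q (Qstar p rew gamma)) ^+ 2)
     + 12 * eps ^+ 2 / (1 - gamma) ^+ 4
     + 3 * tau ^+ 2 * (ln (#|A|%:R : R)) ^+ 2 / (1 - gamma) ^+ 2.
Proof.
(* The bound holds for every iterate. *)
move=> p_kernel rew_le1 gamma01 _ _ _ _ _ _ _ _ eps01 /andP[tau_gt0 _] k _.
have [_ gamma_lt1] := andP gamma01.
rewrite -addrA; apply: (Eiter_le_affine _ _ _ _ p_kernel eps01) => [|Q].
  exact: discounted_bias_ge0.
by rewrite addrA; apply: supnorm_Qpi_softpol_sub_Qstar_sqr_le.
Qed.
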